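(* Let $\mathcal{G}_1,\mathcal{G}_2,\ldots$ be classes of functions from $S$ to $[0,1]$ and $K>0$ a constant such that for every $j$ there exists $M_j\ge 1$ with, for all $n\ge1$ and all $0<\epsilon<1$, \[ P\Big\{\sup_{g\in\mathcal{G}_j}|L(g)-\widehat{L}_n(g)|>\epsilon\Big\}\le K\,2^j\sqrt{j}^{\,j}\Big(\frac{M_j}{\epsilon}\Big)^j\exp(-n\epsilon^2/128). \] Define the complexity penalty $r(n,j)=\sqrt{\dfrac{128\,j\log(2j^{1/2}M_j n)}{n}}$. Let the random pair $(X,Y)$ be such that $\inf_j\inf_{g\in\mathcal{G}_j}L(g)=L^*$. Then the estimator $g^*_n$ based on Structural Risk Minimization (with this penalty) is strongly consistent, i.e. $L(g^*_n)\to L^*$ almost surely.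
   Context: $S\subset\mathbb{R}^d$. $(X,Y)$ is a random pair with values in $S\times[0,1]$ and $(X_1,Y_1),\ldots,(X_n,Y_n)$ is an i.i.d. sample from its distribution. For $g:S\to[0,1]$, $L(g)=E[(g(X)-Y)^2]$ (conditional on the sample for data-dependent $g$) and $\widehat{L}_n(g)=\frac1n\sum_{i=1}^n(g(X_i)-Y_i)^2$. $L^*$ is the infimum of $L(g)$ over all measurable $g$. For each $j$, $\hat g_{n,j}$ minimizes $\widehat{L}_n$ over $\mathcal{G}_j$ (assumed to exist); $\widetilde{L}_{n,j}=\widehat{L}_n(\hat g_{n,j})+r(n,j)$; $g^*_n$ is a function among the $\hat g_{n,j}$ minimizing $\widetilde{L}_{n,j}$ over $j$. Suprema over function classes are assumed measurable. *)

From HB Require Import structures.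
From mathcomp Require Import all_boot all_order all_algebra.
From mathcomp Require Import all_classical all_reals all_analysis.
Set Implicit Arguments. Unset Strict Implicit. Unset Printing Implicit Defensive.
Import Order.TTheory GRing.Theory Num.Theory.
Import numFieldNormedType.Exports.
Local Open Scope classical_set_scope.
Local Open Scope ring_scope.

Section SRM.
Context {R : realType} {d : measure_display} {Omega : measurableType d}
        {dT : measure_display} {T : measurableType dT}.

Definition risk (P : probability Omega R) (X : Omega -> T) (Y : Omega -> R)
  (g : T -> R) : R :=
  fine (\int[P]_w ((g (X w) - Y w) ^+ 2)%:E).

Definition emp_risk (Xs : nat -> Omega -> T) (Ys : nat -> Omega -> R)
  (n : nat) (g : T -> R) (w : Omega) : R :=
  n%:R^-1 * \sum_(i < n) (g (Xs i w) - Ys i w) ^+ 2.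

Definition bayes_risk (P : probability Omega R) (X : Omega -> T) (Y : Omega -> R) : R :=
  inf [set risk P X Y g | g in
        [set g : T -> R | measurable_fun setT g /\ forall x, 0 <= g x <= 1]].

Definition penalty (M : nat -> R) (n j : nat) : R :=
  Num.sqrt (128 * j%:R * ln (2 * Num.sqrt j%:R * M j * n%:R) / n%:R).

Definition iid_sample (P : probability Omega R) (X : Omega -> T) (Y : Omega -> R)
  (Xs : nat -> Omega -> T) (Ys : nat -> Omega -> R) : Prop :=
  [/\ forall i, measurable_fun setT (fun w => (Xs i w, Ys i w)),
      forall i (B : set (T * R)), measurable B ->
        P ((fun w => (Xs i w, Ys i w)) @^-1` B) = P ((fun w => (X w, Y w)) @^-1` B)
    & forall (s : seq nat) (B : nat -> set (T * R)), uniq s ->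
        (forall i, measurable (B i)) ->
        P (\bigcap_(i in [set` s]) ((fun w => (Xs i w, Ys i w)) @^-1` B i)) =
        (\prod_(i <- s) P ((fun w => (Xs i w, Ys i w)) @^-1` B i))%E].

End SRM.

From HB Require Import structures.
From mathcomp Require Import all_boot all_order all_algebra.
From mathcomp Require Import all_classical all_reals all_analysis.
From mathcomp Require Import measurable_realfun.
From mathcomp Require Import ring lra.
Set Implicit Arguments. Unset Strict Implicit. Unset Printing Implicit Defensive.
Import Order.TTheory GRing.Theory Num.Theory.
Import numFieldNormedType.Exports.
Local Open Scope classical_set_scope.
Local Open Scope ring_scope.

(* Fix eps > 0.  The penalty is calibrated so that
   exp (- n r(n,j)^2 / 128) = (2 sqrt j M_j n)^-j, which cancels the polynomial
   factor of the deviation bound taken at level eps + r(n,j); once eps n >= 2 the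
   probability that some class G_j deviates by more than eps + r(n,j) is thus at
   most K exp (- n eps^2 / 128).  By Borel-Cantelli, almost surely, for all large n
   every G_j deviates by at most eps + r(n,j) and a fixed G_j by at most eps.  Then
   the penalized minimizer satisfies L(g*_n) <= L(g) + 2 eps + r(n,j) for every g in
   G_j, and r(n,j) -> 0; letting g approach L^* and eps -> 0 gives L(g*_n) -> L^*. *)

Lemma nneseries_le_geometric (R : realType) (u : (\bar R)^nat) (C q : R) :
  0 < q < 1 -> 0 <= C -> (forall n, (0 <= u n <= (C * q ^+ n)%:E)%E) ->
  (\sum_(n <oo) u n <= (C / (1 - q))%:E)%E.
Proof.
move=> /andP[q0 q1] C0 u_le; apply: lime_le.
  by apply: is_cvg_nneseries => n _; case/andP: (u_le n).
apply: nearW => n /=; apply: (@le_trans _ _ (\sum_(0 <= k < n) (C * q ^+ k)%:E)%E).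
  by apply: lee_sum => k _; case/andP: (u_le k).
rewrite sumEFin lee_fin; apply: geometric_le_lim => //.
by rewrite ger0_norm ?ltW.
Qed.

Lemma not_lim_sup_set_near T (F : (set T)^nat) w :
  ~ lim_sup_set F w -> \forall n \near \oo, ~ F n w.
Proof.
move=> /existsNP[N /not_implyP[_ FNw]]; exists N => // n /= Nn Fnw.
by apply: FNw; exists n.
Qed.

Lemma negligible_lim_sup_set_geometric d (T : measurableType d) (R : realType)
    (mu : {measure set T -> \bar R}) (F : (set T)^nat) (C q : R) :
  (forall n, measurable (F n)) -> 0 <= C -> 0 < q < 1 ->
  (\forall n \near \oo, (mu (F n) <= (C * q ^+ n)%:E)%E) ->
  mu.-negligible (lim_sup_set F).
Proof.
move=> mF C0 q01 [N _ F_le]; have /andP[q0 _] := q01.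
exists (lim_sup_set (fun n => F (n + N)%N)); split.
- by apply: bigcapT_measurable => k; exact: bigcup_measurable.
- apply: lim_sup_set_cvg0 => //; apply: le_lt_trans (ltry _).
  apply: (@nneseries_le_geometric _ _ (C * q ^+ N) q) => //.
    by rewrite mulr_ge0 // exprn_ge0 // ltW.
  move=> n; rewrite measure_ge0 /= -mulrA -exprD addnC.
  by apply: F_le; exact: leq_addr.
- move=> w Fw n _; have [j /= nNj Fjw] := Fw (n + N)%N I.
  have Nj : (N <= j)%N := leq_trans (leq_addl n N) nNj.
  by exists (j - N)%N; rewrite /= ?subnK // leq_subRL // addnC.
Qed.

Lemma expR_tail_geometric (R : realType) (eps : R) n :
  expR (- (n%:R * eps ^+ 2) / 128) = expR (- eps ^+ 2 / 128) ^+ n.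
Proof. by rewrite -expRM_natl; congr expR; ring. Qed.

Lemma expR_tail_lt1 (R : realType) (eps : R) : 0 < eps -> expR (- eps ^+ 2 / 128) < 1.
Proof. by move=> eps_gt0; rewrite expR_lt1 mulNr oppr_lt0 divr_gt0 ?exprn_gt0. Qed.

Lemma penalty_ge0 (R : realType) (M : nat -> R) n j : 0 <= penalty M n j.
Proof. exact: sqrtr_ge0. Qed.

Section penalty.
Context (R : realType) (M : nat -> R) (j : nat).

Lemma penalty_scale_ge1 : (0 < j)%N -> 1 <= M j -> 1 <= 2 * Num.sqrt j%:R * M j.
Proof.
move=> j_gt0 M_ge1; apply: mulr_ege1 => //.
have : 1 <= Num.sqrt (j%:R : R) by rewrite -{1}sqrtr1 ler_sqrt // ler1n.
lra.
Qed.

Lemma penalty_ln_arg_ge1 n : (0 < j)%N -> 1 <= M j -> (0 < n)%N ->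
  1 <= 2 * Num.sqrt j%:R * M j * n%:R.
Proof. by move=> j_gt0 M_ge1 n_gt0; rewrite mulr_ege1 ?penalty_scale_ge1 ?ler1n. Qed.

Lemma expR_penalty n : (0 < j)%N -> 1 <= M j -> (0 < n)%N ->
  expR (- (n%:R * penalty M n j ^+ 2) / 128) =
  (2 * Num.sqrt j%:R * M j * n%:R)^-1 ^+ j.
Proof.
move=> j_gt0 M_ge1 n_gt0; have a1 := penalty_ln_arg_ge1 j_gt0 M_ge1 n_gt0.
set a := 2 * Num.sqrt j%:R * M j * n%:R in a1 *.
have n_neq0 : (n%:R : R) != 0 by rewrite pnatr_eq0 -lt0n.
rewrite /penalty -/a sqr_sqrtr; last by rewrite divr_ge0 ?mulr_ge0 ?ln_ge0.
have -> : - (n%:R * (128 * j%:R * ln a / n%:R)) / 128 = j%:R * - ln a by field.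
by rewrite expRM_natl -lnV ?posrE ?lnK ?posrE ?invr_gt0; lra.
Qed.

Lemma penalty_sqr_le n : (0 < j)%N -> 1 <= M j -> (0 < n)%N ->
  penalty M n j ^+ 2 <= 256 * j%:R * Num.sqrt (2 * Num.sqrt j%:R * M j) / Num.sqrt n%:R.
Proof.
move=> j_gt0 M_ge1 n_gt0; have a1 := penalty_ln_arg_ge1 j_gt0 M_ge1 n_gt0.
have n_gt0' : (0 : R) < n%:R by rewrite ltr0n.
have c_gt0 := lt_le_trans ltr01 (penalty_scale_ge1 j_gt0 M_ge1).
set c := 2 * Num.sqrt j%:R * M j in a1 c_gt0 *.
have sqrt_n : Num.sqrt (n%:R : R) ^+ 2 = n%:R by rewrite sqr_sqrtr // ltW.
have sqrt_n_gt0 : 0 < Num.sqrt (n%:R : R) by rewrite sqrtr_gt0.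
have ln_le : ln (c * n%:R) <= 2 * (Num.sqrt c * Num.sqrt n%:R).
  rewrite -sqrtrM ?ltW //; set t := Num.sqrt (c * n%:R).
  have t_gt0 : 0 < t by rewrite sqrtr_gt0 mulr_gt0.
  have -> : c * n%:R = t ^+ 2 by rewrite sqr_sqrtr // mulr_ge0 ?ltW.
  by rewrite lnXn // mulr2n; have := ln_sublinear t_gt0; lra.
rewrite /penalty -/c sqr_sqrtr; last by rewrite divr_ge0 ?mulr_ge0 ?ln_ge0.
apply: le_trans (_ : _ <= 128 * j%:R * (2 * (Num.sqrt c * Num.sqrt n%:R)) / n%:R) _.
  by rewrite ler_pM2r ?invr_gt0 // ler_pM2l ?mulr_gt0 ?ltr0n.
rewrite le_eqVlt; apply/predU1l; rewrite -[X in _ / X = _]sqrt_n; field; exact: lt0r_neq0.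
Qed.

Lemma penalty_cvg0 : (0 < j)%N -> 1 <= M j -> penalty M n j @[n --> \oo] --> 0.
Proof.
move=> j_gt0 M_ge1; apply/cvgrPdist_le => e e_gt0.
set B := 256 * j%:R * Num.sqrt (2 * Num.sqrt j%:R * M j) / e ^+ 2.
near=> n.
have n_gt0 : (0 < n)%N by near: n; exists 1%N.
rewrite sub0r normrN ger0_norm ?penalty_ge0 //.
rewrite -(@ler_pXn2r _ 2) ?nnegrE ?penalty_ge0 ?(ltW e_gt0) //.
apply: (le_trans (penalty_sqr_le j_gt0 M_ge1 n_gt0)).
rewrite ler_pdivrMr ?sqrtr_gt0 ?ltr0n // -ler_pdivrMl ?exprn_gt0 //.
rewrite mulrC -/B; apply: le_trans (ler_norm B) _.
rewrite -sqrtr_sqr ler_sqrt ?ltr0n //; apply: ltW.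
by near: n; exact: nbhs_infty_gtr.
Unshelve. all: by end_near.
Qed.

Lemma deviation_bound_penalized_le (K eps : R) n :
  (0 < j)%N -> 1 <= M j -> 0 <= K -> 0 < eps -> (0 < n)%N ->
  K * 2 ^+ j * Num.sqrt j%:R ^+ j * (M j / (eps + penalty M n j)) ^+ j
    * expR (- (n%:R * (eps + penalty M n j) ^+ 2) / 128)
  <= K * (eps * n%:R)^-1 ^+ j * expR (- (n%:R * eps ^+ 2) / 128).
Proof.
move=> j_gt0 M_ge1 K_ge0 eps_gt0 n_gt0; have r_ge0 := penalty_ge0 M n j.
set r := penalty M n j in r_ge0 *.
have sj_gt0 : 0 < Num.sqrt (j%:R : R) by rewrite sqrtr_gt0 ltr0n.
have n_gt0' : (0 : R) < n%:R by rewrite ltr0n.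
have M_le : (M j / (eps + r)) ^+ j <= (M j / eps) ^+ j.
  rewrite lerXn2r ?nnegrE ?divr_ge0 ?ler_pM2l ?lef_pV2 ?posrE; lra.
(* Since (eps + r)^2 >= eps^2 + r^2, the exponential factor splits. *)
have exp_le : expR (- (n%:R * (eps + r) ^+ 2) / 128)
    <= expR (- (n%:R * eps ^+ 2) / 128) * expR (- (n%:R * r ^+ 2) / 128).
  have ner_ge0 : 0 <= n%:R * (eps * r) by rewrite mulr_ge0 // mulr_ge0 // ltW.
  by rewrite -expRD ler_expR; nra.
rewrite /r expR_penalty // -/r in exp_le.
apply: (le_trans (ler_pM _ _ (ler_pM _ _ (lexx _) M_le) exp_le)).
- by rewrite !mulr_ge0 ?exprn_ge0 ?sqrtr_ge0 ?divr_ge0 //; lra.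
- exact: expR_ge0.
- by rewrite !mulr_ge0 ?exprn_ge0 ?sqrtr_ge0.
- by rewrite exprn_ge0 ?divr_ge0 //; lra.
have pow_eq : 2 ^+ j * Num.sqrt j%:R ^+ j * (M j / eps) ^+ j
    * (2 * Num.sqrt j%:R * M j * n%:R)^-1 ^+ j = (eps * n%:R)^-1 ^+ j.
  rewrite -!exprMn; congr (_ ^+ _).
  by field; rewrite !lt0r_neq0 ?ltr0n //; lra.
by rewrite -pow_eq le_eqVlt; apply/predU1l; ring.
Qed.

End penalty.

Section risk_bounds.
Context (R : realType) d (Omega : measurableType d) dT (T : measurableType dT).
Context (P : probability Omega R) (X : Omega -> T) (Y : Omega -> R).
Context (Xs : nat -> Omega -> T) (Ys : nat -> Omega -> R).

Lemma risk_ge0 (g : T -> R) : 0 <= risk P X Y g.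
Proof. by apply/fine_ge0/integral_ge0 => w _; rewrite lee_fin sqr_ge0. Qed.

Lemma risk_le1 (g : T -> R) : measurable_fun setT (fun w => (X w, Y w)) ->
  (forall w, 0 <= Y w <= 1) -> measurable_fun setT g -> (forall x, 0 <= g x <= 1) ->
  risk P X Y g <= 1.
Proof.
move=> mXY Y01 mg g01.
have mX : measurable_fun setT X := measurableT_comp measurable_fst mXY.
have mY : measurable_fun setT Y := measurableT_comp measurable_snd mXY.
have sqr_le1 w : (g (X w) - Y w) ^+ 2 <= 1 by have := Y01 w; have := g01 (X w); nra.
have m_sqr : measurable_fun setT (fun w => ((g (X w) - Y w) ^+ 2)%:E).
  apply/measurable_EFinP/measurable_funX/measurable_funB => //.
  exact: measurableT_comp.
have int_ge0 : (0 <= \int[P]_w ((g (X w) - Y w) ^+ 2)%:E)%E.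
  by apply: integral_ge0 => w _; rewrite lee_fin sqr_ge0.
have int_le1 : (\int[P]_w ((g (X w) - Y w) ^+ 2)%:E <= 1)%E.
  apply: (@le_trans _ _ (\int[P]_w (cst 1%:E) w)%E).
    by apply: ge0_le_integral => // w _; rewrite lee_fin ?sqr_ge0 ?sqr_le1.
  by rewrite integral_cst //= probability_setT mul1e.
by rewrite /risk; move: int_ge0 int_le1; case: (\int[P]_w _)%E.
Qed.

Lemma emp_risk_ge0 n (g : T -> R) w : 0 <= emp_risk Xs Ys n g w.
Proof. by rewrite mulr_ge0 ?invr_ge0 ?sumr_ge0 // => i _; exact: sqr_ge0. Qed.

Lemma emp_risk_le1 n (g : T -> R) w : (forall i w, 0 <= Ys i w <= 1) -> (forall x, 0 <= g x <= 1) ->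
  emp_risk Xs Ys n g w <= 1.
Proof.
move=> Ys01 g01; case: n => [|n]; first by rewrite /emp_risk invr0 mul0r.
rewrite /emp_risk ler_pdivrMl ?ltr0Sn // mulr1.
apply: le_trans (_ : _ <= \sum_(i < n.+1) (1 : R)) _; last by rewrite sumr_const card_ord.
by apply: ler_sum => i _; have := Ys01 i w; have := g01 (Xs i w); nra.
Qed.

Lemma risk_sub_emp_risk_le1 n (g : T -> R) w :
  measurable_fun setT (fun w => (X w, Y w)) -> (forall w, 0 <= Y w <= 1) ->
  (forall i w, 0 <= Ys i w <= 1) -> measurable_fun setT g -> (forall x, 0 <= g x <= 1) ->
  `|risk P X Y g - emp_risk Xs Ys n g w| <= 1.
Proof.
move=> mXY Y01 Ys01 mg g01.
have := risk_ge0 g; have := risk_le1 mXY Y01 mg g01.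
have := emp_risk_ge0 n g w; have := emp_risk_le1 n w Ys01 g01.
by rewrite ler_norml; lra.
Qed.

Definition uniform_dev (C : set (T -> R)) n w :=
  sup [set `|risk P X Y g - emp_risk Xs Ys n g w| | g in C].

Section uniform_dev.
Variable C : set (T -> R).
Hypotheses (mXY : measurable_fun setT (fun w => (X w, Y w)))
  (Y01 : forall w, 0 <= Y w <= 1) (Ys01 : forall i w, 0 <= Ys i w <= 1)
  (C01 : forall g, C g -> measurable_fun setT g /\ forall x, 0 <= g x <= 1).

Lemma le_uniform_dev n w g : C g ->
  `|risk P X Y g - emp_risk Xs Ys n g w| <= uniform_dev C n w.
Proof.
move=> Cg; apply: ub_le_sup; last by exists g.
exists 1 => _ [h Ch <-]; have [mh h01] := C01 Ch.
exact: risk_sub_emp_risk_le1.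
Qed.

Lemma uniform_dev_le1 n w : uniform_dev C n w <= 1.
Proof.
rewrite /uniform_dev; set S := [set `|_| | g in C].
have [->|/set0P S_ne] := eqVneq S set0; first by rewrite sup0.
apply: ge_sup => // _ [h Ch <-]; have [mh h01] := C01 Ch.
exact: risk_sub_emp_risk_le1.
Qed.

End uniform_dev.
End risk_bounds.

Section deviation_tail_bounds.
Context (R : realType) d (Omega : measurableType d) (P : probability Omega R).
Context (dev : nat -> nat -> Omega -> R) (K : R) (M : nat -> R).
Hypotheses (m_dev : forall j n, (0 < j)%N -> measurable_fun setT (fun w => dev n j w))
  (dev_le1 : forall j n w, (0 < j)%N -> dev n j w <= 1)
  (K_ge0 : 0 <= K) (M_ge1 : forall j, (0 < j)%N -> 1 <= M j)
  (P_dev_gt : forall j n (eps : R), (0 < j)%N -> (0 < n)%N -> 0 < eps < 1 ->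
     (P [set w | (eps < dev n j w)%R]
      <= (K * 2 ^+ j * Num.sqrt j%:R ^+ j * (M j / eps) ^+ j
           * expR (- (n%:R * eps ^+ 2) / 128))%:E)%E).

Lemma measurable_dev_gt j n a : (0 < j)%N -> measurable [set w | a < dev n j w].
Proof. by move=> j_gt0; rewrite -preimage_itvoy -[_ @^-1` _]setTI; exact: m_dev. Qed.

Lemma P_dev_gt_penalty j n (eps : R) : (0 < j)%N -> 0 < eps -> 2 <= eps * n%:R ->
  (P [set w | (eps + penalty M n j < dev n j w)%R]
   <= (K * expR (- eps ^+ 2 / 128) ^+ n * 2^-1 ^+ j)%:E)%E.
Proof.
move=> j_gt0 eps_gt0 eps_n_ge2.
have n_gt0 : (0 < n)%N.
  by rewrite lt0n; apply: contraTN eps_n_ge2 => /eqP->; rewrite mulr0 -ltNge.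
have r_ge0 := penalty_ge0 M n j.
have [r_lt1|r_ge1] := ltP (eps + penalty M n j) 1; last first.
  rewrite (_ : [set w | _] = set0) ?measure0 ?lee_fin ?mulr_ge0 ?exprn_ge0 ?expR_ge0 //.
  by apply/seteqP; split=> // w /=; have := dev_le1 n w j_gt0; lra.
apply: le_trans (P_dev_gt (eps := eps + penalty M n j) j_gt0 n_gt0 _) _.
  by apply/andP; split; lra.
rewrite lee_fin.
apply: le_trans (deviation_bound_penalized_le j_gt0 (M_ge1 j_gt0) K_ge0 eps_gt0 n_gt0) _.
rewrite -expR_tail_geometric [leRHS]mulrAC; apply: ler_wpM2r; first exact: expR_ge0.
apply: ler_wpM2l => //; apply: lerXn2r; rewrite ?nnegrE ?invr_ge0 //; first lra.
by rewrite lef_pV2 ?posrE //; lra.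
Qed.

(* The classes are indexed from 1, hence the shift j.+1. *)
Definition dev_exceeds_penalty (eps : R) n :=
  \bigcup_j [set w | eps + penalty M n j.+1 < dev n j.+1 w].

Lemma P_dev_exceeds_penalty (eps : R) n : 0 < eps -> 2 <= eps * n%:R ->
  (P (dev_exceeds_penalty eps n) <= (K * expR (- eps ^+ 2 / 128) ^+ n)%:E)%E.
Proof.
move=> eps_gt0 eps_n_ge2; set C := K * expR (- eps ^+ 2 / 128) ^+ n.
have C_ge0 : 0 <= C by rewrite mulr_ge0 // exprn_ge0 // expR_ge0.
have mF j : measurable [set w | eps + penalty M n j.+1 < dev n j.+1 w].
  exact: measurable_dev_gt.
apply: le_trans
  (measure_sigma_subadditive _ mF (bigcupT_measurable _ mF) (@subset_refl _ _)) _.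
apply: le_trans (@nneseries_le_geometric _ _ (C / 2) 2^-1 _ _ _) _.
- by apply/andP; split; lra.
- by rewrite divr_ge0.
- by move=> j; rewrite measure_ge0 /= -mulrA -exprS; exact: P_dev_gt_penalty.
by rewrite lee_fin le_eqVlt; apply/predU1l; field.
Qed.

Lemma negligible_lim_sup_dev_exceeds_penalty eps : 0 < eps ->
  P.-negligible (lim_sup_set (dev_exceeds_penalty eps)).
Proof.
move=> eps_gt0.
apply: (negligible_lim_sup_set_geometric (C := K) (q := expR (- eps ^+ 2 / 128))) => //.
- by move=> n; apply: bigcupT_measurable => j; exact: measurable_dev_gt.
- by rewrite expR_gt0 expR_tail_lt1.
near=> n; apply: P_dev_exceeds_penalty => //.
rewrite -ler_pdivrMl //; apply: ltW; near: n; exact: nbhs_infty_gtr.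
Unshelve. all: by end_near.
Qed.

Lemma negligible_lim_sup_dev_gt j (eps : R) : (0 < j)%N -> 0 < eps < 1 ->
  P.-negligible (lim_sup_set (fun n => [set w | eps < dev n j w])).
Proof.
move=> j_gt0 eps01; have /andP[eps_gt0 _] := eps01.
apply: (negligible_lim_sup_set_geometric
  (C := K * 2 ^+ j * Num.sqrt j%:R ^+ j * (M j / eps) ^+ j)
  (q := expR (- eps ^+ 2 / 128))).
- by move=> n; exact: measurable_dev_gt.
- have M_ge0 := le_trans ler01 (M_ge1 j_gt0).
  by rewrite !mulr_ge0 ?exprn_ge0 ?sqrtr_ge0 ?divr_ge0 ?(ltW eps_gt0).
- by rewrite expR_gt0 expR_tail_lt1.
near=> n; rewrite -expR_tail_geometric; apply: P_dev_gt => //.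
by near: n; exists 1%N.
Unshelve. all: by end_near.
Qed.

End deviation_tail_bounds.

Lemma cvgr_eventually_le_add (R : realType) (u : nat -> R) (l : R) :
  (\forall n \near \oo, l <= u n) ->
  (forall e, 0 < e -> \forall n \near \oo, u n <= l + e) ->
  u n @[n --> \oo] --> l.
Proof.
move=> l_le u_le; apply/cvgrPdist_le => e e_gt0; near=> n.
have l_le_u : l <= u n by near: n.
have u_le_l : u n <= l + e by near: n; exact: u_le.
by rewrite ler_norml; apply/andP; split; lra.
Unshelve. all: by end_near.
Qed.

Lemma inf_infs_adherent (R : realType) (I : Type) (A : set I) (S : I -> set R) (b e : R) :
  A !=set0 -> (forall i, A i -> S i !=set0) -> (forall i, A i -> lbound (S i) b) -> 0 < e ->
  exists2 i, A i & exists2 x, S i x & x < inf [set inf (S i) | i in A] + e.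
Proof.
move=> [i0 Ai0] S_ne S_lb e_gt0.
have S_inf i : A i -> has_inf (S i) by move=> Ai; split; [exact: S_ne | exists b; exact: S_lb].
have infs_inf : has_inf [set inf (S i) | i in A].
  split; first by exists (inf (S i0)), i0.
  by exists b => _ [i Ai <-]; apply: lb_le_inf; [exact: S_ne | exact: S_lb].
have e2_gt0 : 0 < e / 2 by rewrite divr_gt0.
have [_ [i Ai <-] inf_i_lt] := inf_adherent e2_gt0 infs_inf.
have [x Sx x_lt] := inf_adherent e2_gt0 (S_inf i Ai).
by exists i => //; exists x => //; lra.
Qed.

Section structural_risk_minimization.
Context (R : realType) d (Omega : measurableType d) dT (T : measurableType dT).
Context (P : probability Omega R) (X : Omega -> T) (Y : Omega -> R).
Context (Xs : nat -> Omega -> T) (Ys : nat -> Omega -> R) (G : nat -> set (T -> R)).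
Context (M : nat -> R) (ghat : nat -> nat -> Omega -> (T -> R)) (J : nat -> Omega -> nat).
Hypotheses (mXY : measurable_fun setT (fun w => (X w, Y w)))
  (Y01 : forall w, 0 <= Y w <= 1) (Ys01 : forall i w, 0 <= Ys i w <= 1)
  (G01 : forall j g, (0 < j)%N -> G j g ->
     measurable_fun setT g /\ forall x, 0 <= g x <= 1)
  (M_ge1 : forall j, (0 < j)%N -> 1 <= M j)
  (ghat_min : forall n j w, (0 < n)%N -> (0 < j)%N ->
     G j (ghat n j w) /\
     forall g, G j g -> emp_risk Xs Ys n (ghat n j w) w <= emp_risk Xs Ys n g w)
  (J_min : forall n w, (0 < n)%N -> (0 < J n w)%N /\
     forall j, (0 < j)%N ->
       emp_risk Xs Ys n (ghat n (J n w) w) w + penalty M n (J n w)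
       <= emp_risk Xs Ys n (ghat n j w) w + penalty M n j).

Let dev n j w := uniform_dev P X Y Xs Ys (G j) n w.

Lemma dev_ge n j w g : (0 < j)%N -> G j g ->
  `|risk P X Y g - emp_risk Xs Ys n g w| <= dev n j w.
Proof. by move=> j_gt0; apply: le_uniform_dev mXY Y01 Ys01 (@G01 j ^~ j_gt0) n w g. Qed.

Lemma srm_risk_le n w j g (eps : R) : (0 < n)%N -> (0 < j)%N -> G j g ->
  dev n (J n w) w <= eps + penalty M n (J n w) -> dev n j w <= eps ->
  risk P X Y (ghat n (J n w) w) <= risk P X Y g + 2 * eps + penalty M n j.
Proof.
move=> n_gt0 j_gt0 Gg dev_J dev_j; have [J_gt0 J_le] := J_min w n_gt0.
have [GJ _] := ghat_min w n_gt0 J_gt0; have [_ ghat_le] := ghat_min w n_gt0 j_gt0.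
have := dev_ge n w J_gt0 GJ; have := dev_ge n w j_gt0 Gg.
have := J_le j j_gt0; have := ghat_le g Gg.
by rewrite !ler_norml => *; lra.
Qed.

Lemma bayes_risk_le_risk_srm n w : (0 < n)%N ->
  bayes_risk P X Y <= risk P X Y (ghat n (J n w) w).
Proof.
move=> n_gt0; have [J_gt0 _] := J_min w n_gt0; have [GJ _] := ghat_min w n_gt0 J_gt0.
apply: ge_inf; last by exists (ghat n (J n w) w) => //; exact: G01 GJ.
by exists 0 => _ [g _ <-]; exact: risk_ge0.
Qed.

(* The point w only serves to show, through ghat, that the classes are nonempty. *)
Lemma exists_risk_lt_bayes (w : Omega) (e : R) : 0 < e ->
  inf [set inf [set risk P X Y g | g in G j] | j in [set j : nat | (0 < j)%N]]
    = bayes_risk P X Y ->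
  exists2 j, (0 < j)%N & exists2 g, G j g & risk P X Y g < bayes_risk P X Y + e.
Proof.
move=> e_gt0 <-.
have pos_ne : [set j : nat | (0 < j)%N] !=set0 by exists 1%N.
have G_ne j : (0 < j)%N -> [set risk P X Y g | g in G j] !=set0.
  move=> j_gt0; exists (risk P X Y (ghat 1 j w)), (ghat 1 j w) => //.
  exact: (ghat_min (n := 1) w isT j_gt0).1.
have G_lb j : (0 < j)%N -> lbound [set risk P X Y g | g in G j] 0.
  by move=> _ _ [g _ <-]; exact: risk_ge0.
have [j j_gt0 [_ [g Gg <-] g_lt]] := inf_infs_adherent pos_ne G_ne G_lb e_gt0.
by exists j => //; exists g.
Qed.

Lemma risk_srm_eventually_le_bayes w (eps : R) : 0 < eps ->
  inf [set inf [set risk P X Y g | g in G j] | j in [set j : nat | (0 < j)%N]]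
    = bayes_risk P X Y ->
  ~ lim_sup_set (dev_exceeds_penalty dev M eps) w ->
  (forall j, (0 < j)%N -> ~ lim_sup_set (fun n => [set w | eps < dev n j w]) w) ->
  \forall n \near \oo, risk P X Y (ghat n (J n w) w) <= bayes_risk P X Y + 4 * eps.
Proof.
move=> eps_gt0 inf_eq no_overfit_io dev_le_io.
have [j j_gt0 [g Gg g_lt]] := exists_risk_lt_bayes w eps_gt0 inf_eq.
have no_overfit := not_lim_sup_set_near no_overfit_io.
have dev_j_le := not_lim_sup_set_near (dev_le_io j j_gt0).
have r_le : \forall n \near \oo, penalty M n j <= eps.
  have := penalty_cvg0 j_gt0 (M_ge1 j_gt0) => /cvgrPdist_le/(_ eps eps_gt0).
  by apply: filterS => n; rewrite sub0r normrN ger0_norm ?penalty_ge0.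
near=> n.
have n_gt0 : (0 < n)%N by near: n; exists 1%N.
have [J_gt0 _] := J_min w n_gt0.
have dev_J : dev n (J n w) w <= eps + penalty M n (J n w).
  rewrite leNgt; apply/negP => dev_J_gt.
  have : ~ dev_exceeds_penalty dev M eps n w by near: n.
  by apply; exists (J n w).-1 => //; rewrite prednK.
have dev_j : dev n j w <= eps by rewrite leNgt; apply/negP; near: n.
have : penalty M n j <= eps by near: n.
have := srm_risk_le n_gt0 j_gt0 Gg dev_J dev_j.
lra.
Unshelve. all: by end_near.
Qed.

End structural_risk_minimization.

Theorem mainTheorem3 (R : realType) (d : measure_display) (Omega : measurableType d)
  (dT : measure_display) (T : measurableType dT)
  (P : probability Omega R)
  (X : Omega -> T) (Y : Omega -> R)
  (Xs : nat -> Omega -> T) (Ys : nat -> Omega -> R)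
  (G : nat -> set (T -> R)) (K : R) (M : nat -> R)
  (ghat : nat -> nat -> Omega -> (T -> R)) (J : nat -> Omega -> nat) :
  (* the random pair (X,Y) with values in S x [0,1] and the i.i.d. sample *)
  measurable_fun setT (fun w => (X w, Y w)) ->
  (forall w, 0 <= Y w <= 1) ->
  (forall i w, 0 <= Ys i w <= 1) ->
  iid_sample P X Y Xs Ys ->
  (* the classes G_j, j >= 1, of (measurable) functions S -> [0,1] *)
  (forall (j : nat) g, (0 < j)%N -> G j g -> measurable_fun setT g /\ forall x, 0 <= g x <= 1) ->
  (* measurability of the suprema *)
  (forall (j n : nat), (0 < j)%N -> measurable_fun setT
     (fun w => sup [set `|risk P X Y g - emp_risk Xs Ys n g w| | g in G j])) ->
  (* uniform deviation bound *)
  0 < K ->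
  (forall j : nat, (0 < j)%N -> 1 <= M j) ->
  (forall (j n : nat) (eps : R), (0 < j)%N -> (0 < n)%N -> 0 < eps < 1 ->
     (P [set w | (eps < sup [set `|risk P X Y g - emp_risk Xs Ys n g w| | g in G j])%R]
     <= (K * 2 ^+ j * Num.sqrt (j%:R) ^+ j * (M j / eps) ^+ j
           * expR (- (n%:R * eps ^+ 2) / 128))%:E)%E) ->
  (* ghat n j minimizes the empirical risk over G_j *)
  (forall (n j : nat) w, (0 < n)%N -> (0 < j)%N ->
     G j (ghat n j w) /\
     forall g, G j g -> emp_risk Xs Ys n (ghat n j w) w <= emp_risk Xs Ys n g w) ->
  (* J n selects an index minimizing the penalized empirical risk *)
  (forall (n : nat) w, (0 < n)%N -> (0 < J n w)%N /\
     forall j : nat, (0 < j)%N ->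
       emp_risk Xs Ys n (ghat n (J n w) w) w + penalty M n (J n w)
       <= emp_risk Xs Ys n (ghat n j w) w + penalty M n j) ->
  (* inf_j inf_{g in G_j} L(g) = L^* *)
  inf [set inf [set risk P X Y g | g in G j] | j in [set j : nat | (0 < j)%N]]
    = bayes_risk P X Y ->
  (* strong consistency of g*_n = ghat n (J n) *)
  ({ae P, forall w : Omega, risk P X Y (ghat n (J n w) w) @[n --> \oo] --> bayes_risk P X Y}).
Proof.
(* The i.i.d. assumption is used only through the deviation bound. *)
move=> mXY Y01 Ys01 _ G01 m_dev K_gt0 M_ge1 P_dev_gt ghat_min J_min inf_eq.
pose dev n j w := uniform_dev P X Y Xs Ys (G j) n w.
have dev_le1 j n w : (0 < j)%N -> dev n j w <= 1.
  by move=> j_gt0; apply: (uniform_dev_le1 P Xs mXY Y01 Ys01 (G01 j ^~ j_gt0) n w).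
(* k.+2 keeps eps k below 1, where the deviation bound is assumed. *)
pose eps k : R := k.+2%:R^-1.
have eps_gt0 k : 0 < eps k by rewrite invr_gt0.
have eps_lt1 k : eps k < 1 by rewrite invf_lt1 ?ltr1n.
pose bad := \bigcup_k (lim_sup_set (dev_exceeds_penalty dev M (eps k))
  `|` \bigcup_j lim_sup_set (fun n => [set w | eps k < dev n j.+1 w])).
have bad_negligible : P.-negligible bad.
  apply: negligible_bigcup => k; apply: negligibleU.
    exact: (negligible_lim_sup_dev_exceeds_penalty (dev := dev)
      m_dev dev_le1 (ltW K_gt0) M_ge1 P_dev_gt).
  apply: negligible_bigcup => j.
  apply: (negligible_lim_sup_dev_gt (dev := dev) m_dev (ltW K_gt0) M_ge1 P_dev_gt) => //.
  by rewrite eps_gt0 eps_lt1.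
apply: negligibleS bad_negligible => w /= not_cvg; apply: contrapT => good; apply: not_cvg.
apply: cvgr_eventually_le_add.
  near=> n; apply: (bayes_risk_le_risk_srm P X Y G01 ghat_min J_min w).
  by near: n; exists 1%N.
move=> e e_gt0; have e4_gt0 : 0 < e / 4 by rewrite divr_gt0.
have [k _ /(_ k.+1 (leqnSn k)) eps_k_lt] := near_infty_natSinv_lt (PosNum e4_gt0).
apply: filterS (risk_srm_eventually_le_bayes mXY Y01 Ys01 G01 M_ge1 ghat_min J_min
  (eps_gt0 k) inf_eq _ _) => [n|io|j j_gt0 io].
- by have : eps k < e / 4 := eps_k_lt; lra.
- by apply: good; exists k => //; left.
- by apply: good; exists k => //; right; exists j.-1 => //; rewrite prednK.
Unshelve. all: by end_near.
Qed.
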